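(* Let $p\geq1$, $\mu>0$, and let $g:\mathbb{R}^n\to\mathbb{R}\cup\{+\infty\}$ be convex. Let $\lambda^{\ast}$ be the optimal solution of $$\min_{\lambda\in\mathbb{R}^n}\Big\{g(\lambda)+\frac{\mu}{1+\frac1p}\lVert\lambda\rVert^{1+\frac1p}\Big\},$$ and suppose $\lambda^{\ast}\neq0$. Let $\lambda^0\in\mathbb{R}^n$ and generate $\lambda^1,\dots,\lambda^N$ by: $t^k=\lVert\lambda^k\rVert^{\frac1p-1}$ if $\lambda^k\neq0$, $t^k=0$ otherwise, and $\lambda^{k+1}=\arg\min_{\lambda\in\mathbb{R}^n}\{g(\lambda)+\frac{\mu}{2}t^k\lVert\lambda\rVert^2\}$. Suppose $\lVert\lambda^0\rVert\geq\lVert\lambda^{\ast}\rVert$ and $\lambda^k\neq\lambda^{\ast}$ for $k=1,2,\dots,N$. Then $$\lVert\lambda^N-\lambda^{\ast}\rVert\leq\lVert\lambda^{\ast}\rVert\Big(e^{(1-\frac1p)^{N-1}\ln\frac{\lVert\lambda^0\rVert}{\lVert\lambda^{\ast}\rVert}}-1\Big)\leq\big(\lVert\lambda^0\rVert-\lVert\lambda^{\ast}\rVert\big)\Big(1-\frac1p\Big)^{N-1}.$$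
   Context: $\lVert\cdot\rVert$ is the Euclidean norm. The minimizers in the iteration are assumed to exist. *)

From HB Require Import structures.
From mathcomp Require Import all_boot all_order all_algebra.
From mathcomp Require Import all_classical all_reals all_analysis.
Set Implicit Arguments. Unset Strict Implicit. Unset Printing Implicit Defensive.
Import Order.TTheory GRing.Theory Num.Theory.
Local Open Scope ring_scope.
Local Open Scope ereal_scope.
Local Open Scope ring_scope.

Definition enorm (R : realType) (n : nat) (x : 'rV[R]_n) : R :=
  Num.sqrt (\sum_(i < n) x ord0 i ^+ 2).

(* Convexity of an extended-valued function g : R^n -> R \cup {+oo}
   (the codomain restriction "never -oo" is a separate hypothesis). *)
Definition econvex (R : realType) (n : nat) (g : 'rV[R]_n -> \bar R) : Prop :=
  forall (x y : 'rV[R]_n) (t : R), 0 < t < 1 ->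
    (g (t *: x + (1 - t) *: y)%R <= (t%:E * g x + (1 - t)%:E * g y)%E)%E.

Definition is_argmin (R : realType) (n : nat) (f : 'rV[R]_n -> \bar R) (x : 'rV[R]_n) : Prop :=
  forall y, (f x <= f y)%E.

(* Write r = |lamstar| and T = r^(1/p - 1).  Since b^(1+1/p) is majorized by a
   quadratic in b that touches it at b = r (weighted AM-GM), lamstar also minimizes
   the quadratic model g + mu/2 T |.|^2.  Adding the first-order optimality
   conditions of two such quadratic problems, with weights t <= T and minimizers
   x and lamstar, gives t |x|^2 + T r^2 <= (t + T) <x, lamstar>; with Cauchy-Schwarz
   this yields r <= |x|, t |x| <= T r and |x - lamstar| <= r (T/t - 1).  For
   t = |lam k|^(1/p - 1) the middle bound says that ln (|lam k| / r) contracts by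
   the factor 1 - 1/p at each step, and the last one turns this into the error
   bound.  The second inequality is Bernoulli's x^b <= 1 + b (x - 1) for b in [0, 1]. *)

From HB Require Import structures.
From mathcomp Require Import all_boot all_order all_algebra.
From mathcomp Require Import all_classical all_reals all_analysis.
From mathcomp Require Import ring lra.
Set Implicit Arguments. Unset Strict Implicit.
Import Order.TTheory GRing.Theory Num.Theory.
Local Open Scope ring_scope.

Section ScalarInequalities.
Variable R : realType.

Lemma expR_convex (t a b : R) : 0 <= t <= 1 ->
  expR (t * a + (1 - t) * b) <= t * expR a + (1 - t) * expR b.
Proof. by move=> /andP[t0 t1]; have := @convex_expR R (Itv01 t0 t1) a b. Qed.

Lemma expR_mul_ln_le (b x : R) : 0 <= b <= 1 -> 0 < x ->
  expR (b * ln x) <= 1 + b * (x - 1).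
Proof.
move=> b01 x0; have := expR_convex (ln x) 0 b01.
by rewrite mulr0 addr0 expR0 mulr1 lnK ?posrE // => /le_trans; apply; lra.
Qed.

Lemma ler_of_forall_mul01 (a b c : R) : 0 <= c ->
  (forall s, 0 < s < 1 -> a <= b + s * c) -> a <= b.
Proof.
move=> c0 slack; rewrite leNgt; apply/negP => ba.
have den0 : 0 < a - b + c + 1 by lra.
set s := (a - b) / (a - b + c + 1).
have s0 : 0 < s by rewrite divr_gt0 // subr_gt0.
have s1 : s < 1 by rewrite ltr_pdivrMr // mul1r; lra.
have sc : s * c < a - b.
  rewrite /s mulrAC ltr_pdivrMr //.
  have : 0 <= (a - b) * c by rewrite mulr_ge0 // subr_ge0 ltW.
  nra.
have := slack s; rewrite s0 s1 /=; lra.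
Qed.

(* Weighted AM-GM: b^q = (r^(q-2) b^2)^(q/2) (r^q)^(1-q/2), and exp is convex. *)
Lemma powR_le_quadratic (q r b : R) : 0 < q <= 2 -> 0 < r -> 0 <= b ->
  b `^ q <= q / 2 * (r `^ (q - 2) * b ^+ 2) + (1 - q / 2) * r `^ q.
Proof.
move=> /andP[q0 q2] r0; rewrite le_eqVlt => /predU1P[<-|b0].
  rewrite powR0 ?gt_eqF // expr0n mulr0 mulr0 add0r.
  by rewrite mulr_ge0 ?powR_ge0 //; lra.
have -> : r `^ (q - 2) * b ^+ 2 = expR ((q - 2) * ln r + 2 * ln b).
  by rewrite expRD expRM_natl lnK ?posrE // /powR gt_eqF.
rewrite /powR !gt_eqF //.
have -> : q * ln b = q / 2 * ((q - 2) * ln r + 2 * ln b) + (1 - q / 2) * (q * ln r).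
  by field.
by apply: expR_convex; lra.
Qed.

End ScalarInequalities.

Section InnerProduct.
Variables (R : realType) (n : nat).
Implicit Types x y z : 'rV[R]_n.

Definition dot x y : R := \sum_(i < n) x ord0 i * y ord0 i.

Lemma dotC x y : dot x y = dot y x.
Proof. by apply: eq_bigr => i _; rewrite mulrC. Qed.

Lemma dotDl x y z : dot (x + y) z = dot x z + dot y z.
Proof. by rewrite /dot -big_split; apply: eq_bigr => i _; rewrite !mxE mulrDl. Qed.

Lemma dotBl x y z : dot (x - y) z = dot x z - dot y z.
Proof. by rewrite /dot -sumrB; apply: eq_bigr => i _; rewrite !mxE mulrBl. Qed.

Lemma dotZl (a : R) x y : dot (a *: x) y = a * dot x y.
Proof. by rewrite /dot mulr_sumr; apply: eq_bigr => i _; rewrite !mxE mulrA. Qed.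

Lemma dotDr x y z : dot x (y + z) = dot x y + dot x z.
Proof. by rewrite dotC dotDl !(dotC x). Qed.

Lemma dotBr x y z : dot x (y - z) = dot x y - dot x z.
Proof. by rewrite dotC dotBl !(dotC x). Qed.

Lemma dotZr (a : R) x y : dot x (a *: y) = a * dot x y.
Proof. by rewrite dotC dotZl dotC. Qed.

Lemma dot_ge0 x : 0 <= dot x x.
Proof. by apply: sumr_ge0 => i _; rewrite -expr2 sqr_ge0. Qed.

Lemma enorm_sqr x : enorm x ^+ 2 = dot x x.
Proof. by rewrite sqr_sqrtr ?sumr_ge0 // => i _; rewrite sqr_ge0. Qed.

Lemma enorm_ge0 x : 0 <= enorm x.
Proof. exact: sqrtr_ge0. Qed.

Lemma enorm0 : enorm (0 : 'rV[R]_n) = 0.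
Proof. by rewrite /enorm big1 ?sqrtr0 // => i _; rewrite mxE expr0n. Qed.

Lemma enorm_eq0 x : (enorm x == 0) = (x == 0).
Proof.
apply/idP/eqP => [|->]; last by rewrite enorm0.
rewrite -sqrf_eq0 enorm_sqr psumr_eq0 => [/allP x0|i _]; last by rewrite -expr2 sqr_ge0.
apply/rowP => i; rewrite mxE; have := x0 i (mem_index_enum _).
by rewrite /= mulf_eq0 orbb => /eqP.
Qed.

Lemma dot_le_enorm x y : dot x y <= enorm x * enorm y.
Proof.
have [/eqP|x0] := eqVneq (enorm x) 0.
  rewrite enorm_eq0 => /eqP->; rewrite /dot big1 ?enorm0 ?mul0r // => i _.
  by rewrite mxE mul0r.
have [/eqP|y0] := eqVneq (enorm y) 0.
  rewrite enorm_eq0 => /eqP->; rewrite /dot big1 ?enorm0 ?mulr0 // => i _.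
  by rewrite mxE mulr0.
have a0 : 0 < enorm x by rewrite lt0r x0 enorm_ge0.
have b0 : 0 < enorm y by rewrite lt0r y0 enorm_ge0.
have := dot_ge0 (enorm y *: x - enorm x *: y).
rewrite dotBl !dotBr !dotZl !dotZr -!enorm_sqr (dotC y x) => sq_ge0.
have : 2 * enorm x * enorm y * dot x y <= 2 * enorm x * enorm y * (enorm x * enorm y) by nra.
by rewrite ler_pM2l // !mulr_gt0.
Qed.

Lemma weighted_cross_bounds (c1 c2 : R) x y :
  0 < c1 <= c2 -> y != 0 ->
  c1 * dot x x + c2 * dot y y <= (c1 + c2) * dot x y ->
  [/\ enorm y <= enorm x, c1 * enorm x <= c2 * enorm y
    & enorm (x - y) <= enorm y * (c2 / c1 - 1)].
Proof.
move=> /andP[c10 c12] y0 cross.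
have b0 : 0 < enorm y by rewrite lt0r enorm_eq0 y0 enorm_ge0.
have a0 := enorm_ge0 x.
have := dot_le_enorm x y; rewrite -!enorm_sqr in cross * => xy.
have prod_le0 : (enorm x - enorm y) * (c1 * enorm x - c2 * enorm y) <= 0.
  have : (c1 + c2) * dot x y <= (c1 + c2) * (enorm x * enorm y) by rewrite ler_wpM2l //; lra.
  nra.
have yx : enorm y <= enorm x.
  rewrite leNgt; apply/negP => xy'.
  have : c1 * enorm x < c2 * enorm y.
    apply: (le_lt_trans (_ : _ <= c2 * enorm x)); first by rewrite ler_wpM2r.
    by rewrite ltr_pM2l //; lra.
  nra.
have c1x : c1 * enorm x <= c2 * enorm y.
  have [->|] := eqVneq (enorm x) (enorm y); first by rewrite ler_wpM2r //; lra.
  by rewrite neq_lt ltNge yx /=; nra.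
split => //.
have dist2 : c2 * enorm (x - y) ^+ 2 <= (c2 - c1) * (enorm x * enorm (x - y)).
  have := dot_le_enorm x (x - y).
  rewrite !enorm_sqr dotBl !dotBr (dotC y x) -!enorm_sqr in cross * => xxy.
  have := ler_wpM2l (_ : 0 <= c2 - c1) xxy; rewrite subr_ge0 => /(_ c12).
  nra.
have dist : c2 * enorm (x - y) <= (c2 - c1) * enorm x.
  have [->|] := eqVneq (enorm (x - y)) 0; first by rewrite mulr0 mulr_ge0 // subr_ge0.
  move=> d_neq0; have d0 : 0 < enorm (x - y) by rewrite lt0r d_neq0 enorm_ge0.
  by rewrite -(ler_pM2r d0) -mulrA -expr2; lra.
have -> : enorm y * (c2 / c1 - 1) = (c2 - c1) * enorm y / c1 by field; lra.
rewrite ler_pdivlMr // -(ler_pM2l (lt_le_trans c10 c12)).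
have := ler_wpM2l (_ : 0 <= c2 - c1) c1x; rewrite subr_ge0 => /(_ c12).
nra.
Qed.

End InnerProduct.

Section RegularizedMinimizers.
Variables (R : realType) (n : nat) (g : 'rV[R]_n -> \bar R).
Hypothesis g_neqNy : forall x, g x != -oo%E.
Implicit Types x y : 'rV[R]_n.

Definition dom x := g x != +oo%E.

Lemma dom_fineK x : dom x -> g x = (fine (g x))%:E.
Proof. by move=> dx; rewrite fineK // fin_numE g_neqNy. Qed.

Lemma argmin_dom (F : 'rV[R]_n -> R) x y :
  is_argmin (fun l => (g l + (F l)%:E)%E) x -> dom y -> dom x.
Proof.
move=> xmin dy; apply/negP => /eqP gx; have := xmin y.
by rewrite gx (dom_fineK dy) -EFinD leye_eq.
Qed.

Lemma argmin_fine (F : 'rV[R]_n -> R) x y :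
  is_argmin (fun l => (g l + (F l)%:E)%E) x -> dom x -> dom y ->
  fine (g x) + F x <= fine (g y) + F y.
Proof. by move=> xmin dx dy; have := xmin y; rewrite (dom_fineK dx) (dom_fineK dy). Qed.

Lemma argmin_all_infty (F : 'rV[R]_n -> R) x :
  is_argmin (fun l => (g l + (F l)%:E)%E) x -> g x = +oo%E ->
  forall y, is_argmin (fun l => (g l + (F l)%:E)%E) y.
Proof.
move=> xmin gx y z.
have /negP/negPn/eqP -> : ~ dom y by move/(argmin_dom xmin); rewrite /dom gx.
have /negP/negPn/eqP -> // : ~ dom z by move/(argmin_dom xmin); rewrite /dom gx.
Qed.

Hypothesis g_convex : econvex g.

Lemma convex_fine x y t : dom x -> dom y -> 0 < t < 1 ->
  dom (t *: x + (1 - t) *: y) /\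
  fine (g (t *: x + (1 - t) *: y)) <= t * fine (g x) + (1 - t) * fine (g y).
Proof.
move=> dx dy t01; have := g_convex x y t01.
rewrite (dom_fineK dx) (dom_fineK dy) -!EFinM -EFinD => gz.
have dz : dom (t *: x + (1 - t) *: y) by apply/negP => /eqP gzoo; rewrite gzoo leye_eq in gz.
by split => //; rewrite (dom_fineK dz) lee_fin in gz.
Qed.

(* First-order optimality, obtained by comparing x with x + s (y - x) and letting s -> 0. *)
Lemma quad_argmin_optimality (c : R) x y : 0 <= c ->
  is_argmin (fun l => (g l + (c * enorm l ^+ 2)%:E)%E) x -> dom x -> dom y ->
  fine (g x) - fine (g y) <= 2 * c * (dot x y - dot x x).
Proof.
move=> c0 xmin dx dy.
apply: (@ler_of_forall_mul01 _ _ _ (c * dot (y - x) (y - x))) => [|s s01].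
  by rewrite mulr_ge0 ?dot_ge0.
rewrite dotBl !dotBr (dotC y x).
have [dz gz] := convex_fine dy dx s01.
have := argmin_fine xmin dx dz.
rewrite !enorm_sqr !dotDl !dotDr !dotZl !dotZr (dotC y x) => xz.
have s0 : 0 < s by case/andP: s01.
rewrite -(ler_pM2l s0); nra.
Qed.

Lemma quad_argmin_cross (c1 c2 : R) x y : 0 <= c1 -> 0 <= c2 ->
  is_argmin (fun l => (g l + (c1 * enorm l ^+ 2)%:E)%E) x ->
  is_argmin (fun l => (g l + (c2 * enorm l ^+ 2)%:E)%E) y -> dom x -> dom y ->
  c1 * dot x x + c2 * dot y y <= (c1 + c2) * dot x y.
Proof.
move=> c10 c20 xmin ymin dx dy.
have := quad_argmin_optimality c10 xmin dx dy.
have := quad_argmin_optimality c20 ymin dy dx.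
rewrite (dotC y x); lra.
Qed.

End RegularizedMinimizers.

Section PowerRegularization.
Variables (R : realType) (n : nat) (p mu : R) (g : 'rV[R]_n -> \bar R).
Variable lamstar : 'rV[R]_n.
Hypotheses (p_ge1 : 1 <= p) (mu_gt0 : 0 < mu).
Hypotheses (g_neqNy : forall x, g x != -oo%E) (g_convex : econvex g).
Hypothesis lamstar_min :
  is_argmin (fun l => (g l + (mu / (1 + p^-1) * enorm l `^ (1 + p^-1))%:E)%E) lamstar.
Hypotheses (lamstar_neq0 : lamstar != 0) (dom_lamstar : dom g lamstar).

Let r := enorm lamstar.

Let r_gt0 : 0 < r.
Proof. by rewrite lt0r enorm_eq0 lamstar_neq0 enorm_ge0. Qed.

Let pinv_gt0 : 0 < p^-1.
Proof. by rewrite invr_gt0 (lt_le_trans ltr01). Qed.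

Let pinv_le1 : p^-1 <= 1.
Proof. by rewrite invf_le1 // (lt_le_trans ltr01). Qed.

Lemma lamstar_quad_argmin :
  is_argmin (fun l => (g l + (mu / 2 * r `^ (p^-1 - 1) * enorm l ^+ 2)%:E)%E) lamstar.
Proof.
move=> y; have [dy|/negPn/eqP ->] := boolP (dom g y); last by rewrite addye ?leey.
rewrite (dom_fineK g_neqNy dom_lamstar) (dom_fineK g_neqNy dy) -!EFinD lee_fin.
have := argmin_fine g_neqNy lamstar_min dom_lamstar dy.
set q := 1 + p^-1; have -> : p^-1 - 1 = q - 2 by rewrite /q; ring.
have q02 : 0 < q <= 2 by rewrite /q; have := pinv_gt0; have := pinv_le1; lra.
have := powR_le_quadratic q02 r_gt0 (enorm_ge0 y).
have Tr : r `^ (q - 2) * r ^+ 2 = r `^ q.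
  by rewrite -powR_mulrn ?(ltW r_gt0) // -powRD ?subrK // (gt_eqF r_gt0) implybT.
move=> young opt; have q0 : 0 < q by case/andP: q02.
have := ler_wpM2l (ltW (divr_gt0 mu_gt0 q0)) young.
set T := r `^ (q - 2) in Tr *; set b := enorm y.
have -> : mu / q * (q / 2 * (T * b ^+ 2) + (1 - q / 2) * r `^ q) =
          mu / 2 * T * b ^+ 2 + (mu / q - mu / 2) * r `^ q by field; lra.
have -> : mu / 2 * T * r ^+ 2 = mu / 2 * r `^ q by rewrite -Tr; ring.
lra.
Qed.

Lemma power_prox_step (x x' : 'rV[R]_n) : r <= enorm x ->
  is_argmin (fun l => (g l + (mu / 2 * enorm x `^ (p^-1 - 1) * enorm l ^+ 2)%:E)%E) x' ->
  [/\ r <= enorm x',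
      ln (enorm x') - ln r <= (1 - p^-1) * (ln (enorm x) - ln r)
    & enorm (x' - lamstar) <= r * (expR ((1 - p^-1) * (ln (enorm x) - ln r)) - 1)].
Proof.
move=> rx x'min; have x0 : 0 < enorm x := lt_le_trans r_gt0 rx.
set t := enorm x `^ (p^-1 - 1) in x'min *; set T := r `^ (p^-1 - 1).
have tE : t = expR ((p^-1 - 1) * ln (enorm x)) by rewrite /t /powR gt_eqF.
have TE : T = expR ((p^-1 - 1) * ln r) by rewrite /T /powR gt_eqF.
have tT : t <= T by rewrite tE TE ler_expR ler_wnM2l ?subr_le0 // ler_ln ?posrE.
have t0 : 0 < t by rewrite tE expR_gt0.
have mu2 : 0 < mu / 2 by rewrite divr_gt0.
have c12 : 0 < mu / 2 * t <= mu / 2 * T by rewrite mulr_gt0 //= ler_pM2l.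
have [c1_gt0 c12'] := andP c12.
have := quad_argmin_cross g_neqNy g_convex (ltW c1_gt0) (ltW (lt_le_trans c1_gt0 c12'))
  x'min lamstar_quad_argmin (argmin_dom g_neqNy x'min dom_lamstar) dom_lamstar.
move=> /(weighted_cross_bounds c12 lamstar_neq0) [rx' tx' dist].
have x'0 : 0 < enorm x' := lt_le_trans r_gt0 rx'.
have ratioE : mu / 2 * T / (mu / 2 * t) = expR ((1 - p^-1) * (ln (enorm x) - ln r)).
  rewrite invfM mulrACA mulfV ?gt_eqF // mul1r TE tE -expRB; congr expR; ring.
split => //; last by rewrite ratioE in dist.
have T0 : 0 < T by rewrite TE expR_gt0.
have : ln (t * enorm x') <= ln (T * r).
  by rewrite ler_ln ?posrE ?mulr_gt0 // -(ler_pM2l mu2) !mulrA.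
rewrite !lnM ?posrE // tE TE !expRK; lra.
Qed.

Variables (lam : nat -> 'rV[R]_n) (N : nat).
Hypothesis lam_step : forall k, (k < N)%N ->
  let t := if lam k != 0 then enorm (lam k) `^ (p^-1 - 1) else 0 in
  is_argmin (fun l => (g l + (mu / 2 * t * enorm l ^+ 2)%:E)%E) (lam k.+1).
Hypothesis lam0_ge : r <= enorm (lam 0).

Let lam_step_pos k : (k < N)%N -> r <= enorm (lam k) ->
  is_argmin (fun l => (g l + (mu / 2 * enorm (lam k) `^ (p^-1 - 1) * enorm l ^+ 2)%:E)%E)
    (lam k.+1).
Proof.
move=> kN rk; have := lam_step kN.
by rewrite /= -enorm_eq0 gt_eqF // (lt_le_trans r_gt0 rk).
Qed.

Lemma iterate_log_bound k : (k <= N)%N ->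
  r <= enorm (lam k) /\
  ln (enorm (lam k)) - ln r <= (1 - p^-1) ^+ k * (ln (enorm (lam 0)) - ln r).
Proof.
elim: k => [_|k IH kN]; first by rewrite expr0 mul1r.
have [rk logk] := IH (ltnW kN).
have [rk' logk' _] := power_prox_step rk (lam_step_pos kN rk).
split => //; rewrite exprS -mulrA; apply: (le_trans logk').
by rewrite ler_wpM2l // subr_ge0.
Qed.

Lemma iterate_error_bound : (1 <= N)%N ->
  enorm (lam N - lamstar) <=
  r * (expR ((1 - p^-1) ^+ N.-1 * ln (enorm (lam 0) / r)) - 1).
Proof.
move=> N1; have kN : (N.-1 < N)%N by rewrite ltn_predL.
have [rk logk] := iterate_log_bound (ltnW kN).
have [_ _] := power_prox_step rk (lam_step_pos kN rk); rewrite prednK // => dist.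
apply: (le_trans dist); rewrite ler_pM2l // lerD2r ler_expR.
rewrite ln_div ?posrE ?(lt_le_trans r_gt0 lam0_ge) //; apply: le_trans logk.
by rewrite ler_piMl ?subr_ge0 ?ler_ln ?posrE ?(lt_le_trans r_gt0 rk) // gerBl ltW.
Qed.

End PowerRegularization.

Unset Implicit Arguments.

Theorem theorem4p6 (R : realType) (n : nat) (p mu : R)
  (g : 'rV[R]_n -> \bar R) (lamstar : 'rV[R]_n) (lam : nat -> 'rV[R]_n) (N : nat) :
  1 <= p -> 0 < mu ->
  (forall x, g x != -oo%E) -> econvex g ->
  (* lamstar is the (unique) optimal solution of the power-regularized problem *)
  is_argmin (fun l => (g l + (mu / (1 + p^-1) * enorm l `^ (1 + p^-1))%:E)%E) lamstar ->
  (forall l, is_argmin (fun l => (g l + (mu / (1 + p^-1) * enorm l `^ (1 + p^-1))%:E)%E) l ->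
     l = lamstar) ->
  lamstar != 0 ->
  (* the iteration *)
  (forall k, (k < N)%N ->
     let t := if lam k != 0 then enorm (lam k) `^ (p^-1 - 1) else 0 in
     is_argmin (fun l => (g l + (mu / 2 * t * enorm l ^+ 2)%:E)%E) (lam k.+1)) ->
  (1 <= N)%N ->
  enorm lamstar <= enorm (lam 0%N) ->
  (forall k, (1 <= k <= N)%N -> lam k != lamstar) ->
  enorm (lam N - lamstar)
    <= enorm lamstar *
       (expR ((1 - p^-1) ^+ (N.-1) * ln (enorm (lam 0%N) / enorm lamstar)) - 1)
  /\ enorm lamstar *
       (expR ((1 - p^-1) ^+ (N.-1) * ln (enorm (lam 0%N) / enorm lamstar)) - 1)
     <= (enorm (lam 0%N) - enorm lamstar) * (1 - p^-1) ^+ (N.-1).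
Proof.
move=> p_ge1 mu_gt0 g_neqNy g_convex lamstar_min lamstar_unique lamstar_neq0 lam_step N_ge1
  lam0_ge _.
have dom_lamstar : dom g lamstar.
  apply/eqP => /(argmin_all_infty g_neqNy lamstar_min) all_min.
  by move: lamstar_neq0; rewrite -(lamstar_unique 0 (all_min 0)) eqxx.
have r_gt0 : 0 < enorm lamstar by rewrite lt0r enorm_eq0 lamstar_neq0 enorm_ge0.
split; first exact: (iterate_error_bound p_ge1 mu_gt0 g_neqNy g_convex lamstar_min
  lamstar_neq0 dom_lamstar lam_step lam0_ge N_ge1).
have p_gt0 : 0 < p := lt_le_trans ltr01 p_ge1.
have pinv01 : 0 <= 1 - p^-1 <= 1 by rewrite subr_ge0 invf_le1 // p_ge1 gerBl invr_ge0 ltW.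
set beta := (1 - p^-1) ^+ N.-1.
have beta01 : 0 <= beta <= 1 by rewrite exprn_ge0 ?exprn_ile1 //; case/andP: pinv01.
have := expR_mul_ln_le beta01 (divr_gt0 (lt_le_trans r_gt0 lam0_ge) r_gt0).
have -> : (enorm (lam 0%N) - enorm lamstar) * beta =
  enorm lamstar * (beta * (enorm (lam 0%N) / enorm lamstar - 1)) by field; rewrite gt_eqF.
by move=> bernoulli; rewrite ler_pM2l //; lra.
Qed.
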